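(* Let $d\ge 1$ and let $\mathcal S:\mathbb C^d\to\mathcal H$ be a map into a real Hilbert space $\mathcal H$ satisfying: (i) $\mathcal S$ is real-linear: $\mathcal S(a|\phi\rangle+b|\psi\rangle)=a\,\mathcal S(|\phi\rangle)+b\,\mathcal S(|\psi\rangle)$ for all $|\phi\rangle,|\psi\rangle\in\mathbb C^d$, $a,b\in\mathbb R$; (ii) there is a real representation $g$ of $\mathrm{SO}(2)$ on $\mathcal H$ such that $\mathcal S(e^{i\alpha}|\psi\rangle)=g(R_\alpha)\,\mathcal S(|\psi\rangle)$ for all $|\psi\rangle$ and all $\alpha\in\mathbb R$, where $R_\alpha\in\mathrm{SO}(2)$ is the rotation by angle $\alpha$; (iii) if $\langle\phi|\psi\rangle=0$ then $\mathcal S(|\phi\rangle)^T\mathcal S(|\psi\rangle)=0$, and if $\langle\phi|\psi\rangle=1$ then $\mathcal S(|\phi\rangle)^T\mathcal S(|\psi\rangle)=1$; (iv) $\mathcal S$ is surjective onto $\mathcal H$. Then $\mathcal H\cong\mathbb R^d\otimes\mathbb R^2$ (as real Hilbert spaces), and there exist an orthonormal basis $\{|e_j\rangle\}_{j=1}^d$ of $\mathbb C^d$ and an orthonormal basis $\{|\tilde e_j\rangle\otimes|0\rangle_F,\ |\tilde e_j\rangle\otimes|1\rangle_F\}_{j=1}^d$ of $\mathcal H\cong\mathbb R^d\otimes\mathbb R^2$ such that for all $c_1,\dots,c_d\in\mathbb C$, $$\mathcal S\Big(\sum_{j=1}^d c_j|e_j\rangle\Big)=\sum_{j=1}^d\big[\mathrm{Re}(c_j)\,|\tilde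 e_j\rangle\otimes|0\rangle_F+\mathrm{Im}(c_j)\,|\tilde e_j\rangle\otimes|1\rangle_F\big].$$
   Context: $\{|0\rangle_F,|1\rangle_F\}$ denotes the standard orthonormal basis of the second factor $\mathbb R^2$ (the ''flag''). For real vectors, $v^T w$ is the real inner product. *)

From HB Require Import structures.
From mathcomp Require Import all_boot all_order all_algebra.
From mathcomp Require Import reals trigo.
From mathcomp Require Import complex.

Set Implicit Arguments.
Unset Strict Implicit.
Unset Printing Implicit Defensive.
Import Order.TTheory GRing.Theory Num.Theory.
Local Open Scope ring_scope.

Section Defs.
Variable R : realType.

Definition cip (d : nat) (phi psi : 'cV[R[i]]_d) : R[i] :=
  \sum_(j < d) conjc (phi j 0) * psi j 0.

Definition eiang (a : R) : R[i] := Complex (cos a) (sin a).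

Definition cONB (d : nat) (e : 'I_d -> 'cV[R[i]]_d) : Prop :=
  (forall i j, cip (e i) (e j) = (i == j)%:R) /\
  (forall v : 'cV[R[i]]_d, exists c : 'I_d -> R[i], v = \sum_(j < d) c j *: e j).

Definition rONB (d : nat) (e : 'I_d -> 'cV[R]_d) : Prop :=
  (forall i j, \sum_(k < d) e i k 0 * e j k 0 = (i == j)%:R) /\
  (forall v : 'cV[R]_d, exists c : 'I_d -> R, v = \sum_(j < d) c j *: e j).

(* R^d (x) R^2 is realised as 'M[R]_(d,2), with v (x) w := v w^T and the
   (Frobenius) inner product, which is the tensor-product inner product. *)
Definition tensor (d : nat) (v : 'cV[R]_d) (w : 'cV[R]_2) : 'M[R]_(d, 2) :=
  v *m w^T.

Definition tens_ip (d : nat) (A B : 'M[R]_(d, 2)) : R :=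
  \sum_(i < d) \sum_(k < 2) A i k * B i k.

Definition ketF (k : 'I_2) : 'cV[R]_2 := delta_mx k 0.

Definition is_real_hilbert (H : lmodType R) (ip : H -> H -> R) : Prop :=
  [/\ (forall x y, ip x y = ip y x),
      (forall a x y z, ip (a *: x + y) z = a * ip x z + ip y z),
      (forall x, 0 <= ip x x),
      (forall x, ip x x = 0 -> x = 0) &
      (forall u : nat -> H,
         (forall eps : R, 0 < eps -> exists N : nat, forall m n : nat,
             (N <= m)%N -> (N <= n)%N -> ip (u m - u n) (u m - u n) < eps) ->
         exists l : H, forall eps : R, 0 < eps -> exists N : nat,
             forall n : nat, (N <= n)%N -> ip (u n - l) (u n - l) < eps)].

Definition is_SO2 (M : 'M[R]_2) : Prop := M^T *m M = 1%:M /\ \det M = 1.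

Definition rotation2 (a : R) : 'M[R]_2 :=
  \matrix_(i < 2, j < 2)
    if i == j then cos a else if i == 0 then - sin a else sin a.

Definition is_SO2_rep (H : lmodType R) (ip : H -> H -> R)
    (g : 'M[R]_2 -> H -> H) : Prop :=
  [/\ (forall M, is_SO2 M ->
         forall (a : R) (x y : H), g M (a *: x + y) = a *: g M x + g M y),
      (forall x, g 1%:M x = x),
      (forall M N, is_SO2 M -> is_SO2 N -> forall x, g (M *m N) x = g M (g N x)) &
      (forall M, is_SO2 M -> forall (x : H) (eps : R), 0 < eps ->
         exists delta : R, 0 < delta /\ forall N, is_SO2 N ->
           (forall i j, `|N i j - M i j| < delta) ->
           ip (g N x - g M x) (g N x - g M x) < eps)].

End Defs.

From HB Require Import structures.
From mathcomp Require Import all_boot all_order all_algebra.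
From mathcomp Require Import reals trigo.
From mathcomp Require Import complex.
From mathcomp Require Import lra.
Import Order.TTheory GRing.Theory Num.Theory.
Local Open Scope ring_scope.

(* Identify R^d (x) R^2 with 'M_(d,2) and a complex column with the real
   matrix whose rows are (Re, Im) of its entries.  Composing S with this
   identification gives a real-linear map U, and hypothesis (iii) applied to
   the vectors e_j and i e_j of the standard basis shows that U sends the
   standard basis of 'M_(d,2) to an orthonormal family: for distinct j this is
   orthogonality, S(e_j) and S(i e_j) are unit vectors because
   <e_j|e_j> = <i e_j|i e_j> = 1, and they are orthogonal to each other by
   polarisation, since <(1+i) e_j | (1+i)/2 e_j> = 1.  So U is an isometry,
   hence injective, and surjectivity of S makes it bijective. *)

Section RealInnerProduct.
Context {R : pzRingType} {H : lmodType R} {ip : H -> H -> R}.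
Hypothesis ipC : forall x y, ip x y = ip y x.
Hypothesis ipL : forall a x y z, ip (a *: x + y) z = a * ip x z + ip y z.

Lemma ip0l z : ip 0 z = 0.
Proof.
have := ipL 1 0 0 z; rewrite scaler0 addr0 mul1r => ip0z.
by apply/(addrI (ip 0 z)); rewrite addr0 -ip0z.
Qed.

Lemma ipDl x y z : ip (x + y) z = ip x z + ip y z.
Proof. by have := ipL 1 x y z; rewrite scale1r mul1r. Qed.

Lemma ipZl a x z : ip (a *: x) z = a * ip x z.
Proof. by have := ipL a x 0 z; rewrite addr0 ip0l addr0. Qed.

Lemma ipDr x y z : ip z (x + y) = ip z x + ip z y.
Proof. by rewrite ipC ipDl ![ip _ z]ipC. Qed.

Lemma ipZr a x z : ip z (a *: x) = a * ip z x.
Proof. by rewrite ipC ipZl ipC. Qed.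

Lemma ip_sumr (I : Type) (r : seq I) (P : pred I) (F : I -> H) z :
  ip z (\sum_(i <- r | P i) F i) = \sum_(i <- r | P i) ip z (F i).
Proof.
apply: (big_morph (ip z)) => [x y|]; first exact: ipDr.
by rewrite ipC ip0l.
Qed.

End RealInnerProduct.

Lemma inj_surj_bij (A : choiceType) (B : eqType) (f : A -> B) :
  injective f -> (forall b, exists a, f a = b) -> bijective f.
Proof.
move=> f_inj f_surj.
have ex b : exists a, f a == b by have [a <-] := f_surj b; exists a.
have finvK b : f (xchoose (ex b)) = b by apply/eqP/(xchooseP (ex b)).
by exists (fun b => xchoose (ex b)) => [a|b]; [apply: f_inj|].
Qed.

Lemma colv_sum_delta (T : pzSemiRingType) (d : nat) (v : 'cV[T]_d) :
  v = \sum_(j < d) v j 0 *: delta_mx j 0.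
Proof.
by rewrite {1}(matrix_sum_delta v); apply: eq_bigr => j _; rewrite big_ord1.
Qed.

Section StandardBases.
Context {R : realType} {d : nat}.

Lemma cip_scale_delta (a b : R[i]) (j k : 'I_d) :
  cip (a *: delta_mx j 0) (b *: delta_mx k 0) = conjc a * b * (j == k)%:R.
Proof.
rewrite /cip (bigD1 j) //= big1 ?addr0 => [|l /negbTE ljF].
  by rewrite !mxE !eqxx /= andbT mulr1 mulrA.
by rewrite !mxE ljF mulr0 conjc0 mul0r.
Qed.

Lemma cONB_delta : cONB (fun j : 'I_d => delta_mx j 0 : 'cV[R[i]]_d).
Proof.
split=> [j k|v]; last by exists (fun j => v j 0); apply: colv_sum_delta.
by have := cip_scale_delta 1 1 j k; rewrite !scale1r conjc1 !mul1r.
Qed.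

Lemma rONB_delta : rONB (fun j : 'I_d => delta_mx j 0 : 'cV[R]_d).
Proof.
split=> [j k|v]; last by exists (fun j => v j 0); apply: colv_sum_delta.
rewrite (bigD1 j) //= big1 ?addr0 => [|l /negbTE ljF]; last first.
  by rewrite !mxE ljF mul0r.
by rewrite !mxE eqxx /= mul1r andbT eq_sym.
Qed.

Lemma tensor_delta (j : 'I_d) (k : 'I_2) :
  tensor (delta_mx j 0) (ketF R k) = delta_mx j k.
Proof. by rewrite /tensor /ketF trmx_delta mul_delta_mx. Qed.

Lemma tens_ip_eq0 (A : 'M[R]_(d, 2)) : tens_ip A A = 0 -> A = 0.
Proof.
have sq_ge0 (x : R) : 0 <= x * x by rewrite -expr2 sqr_ge0.
have row_ge0 j (_ : true) : 0 <= \sum_(k < 2) A j k * A j k by apply: sumr_ge0.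
move=> /(psumr_eq0P row_ge0) rows0; apply/matrixP => j k; rewrite mxE.
have /eqP := psumr_eq0P (fun l _ => sq_ge0 (A j l)) (rows0 j isT) (i := k) isT.
by rewrite -expr2 sqrf_eq0 => /eqP.
Qed.

Definition cplx_of_mx (A : 'M[R]_(d, 2)) : 'cV[R[i]]_d :=
  \col_j Complex (A j 0) (A j 1).

Definition mx_of_cplx (v : 'cV[R[i]]_d) : 'M[R]_(d, 2) :=
  \matrix_(j, k) if k == 0 then complex.Re (v j 0) else complex.Im (v j 0).

Lemma mx_of_cplxK : cancel mx_of_cplx cplx_of_mx.
Proof. by move=> v; apply/matrixP => j l; rewrite !mxE ord1; case: (v j 0). Qed.

Lemma cplx_of_mx_linear (a : R) (A B : 'M[R]_(d, 2)) :
  cplx_of_mx (a *: A + B) = a%:C%C *: cplx_of_mx A + cplx_of_mx B.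
Proof. by apply/matrixP => j l; rewrite !mxE /=; simpc. Qed.

Definition flag_unit (k : 'I_2) : R[i] := if k == 0 then 1 else 'i%C.

Lemma flag_unit_norm k : conjc (flag_unit k) * flag_unit k = 1.
Proof. by rewrite /flag_unit; case: ifP => _; apply/eqP; simpc. Qed.

Lemma cplx_of_mx_delta (j : 'I_d) (k : 'I_2) :
  cplx_of_mx (delta_mx j k) = flag_unit k *: delta_mx j 0.
Proof.
apply/matrixP => l m; rewrite !mxE ord1 /flag_unit.
case: (l == j); rewrite /= ?mulr1 ?mulr0 //.
by case: k => [[|[|//]]] ?; apply/eqP; simpc.
Qed.

End StandardBases.

Section RealLinearEncoding.
Context {R : realType} {d : nat} {H : lmodType R} {ip : H -> H -> R}.
Variable S : 'cV[R[i]]_d -> H.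
Hypothesis ipC : forall x y, ip x y = ip y x.
Hypothesis ipL : forall a x y z, ip (a *: x + y) z = a * ip x z + ip y z.
Hypothesis S_linear : forall (phi psi : 'cV[R[i]]_d) (a b : R),
  S ((a%:C)%C *: phi + (b%:C)%C *: psi) = a *: S phi + b *: S psi.
Hypothesis S_orth : forall phi psi, cip phi psi = 0 -> ip (S phi) (S psi) = 0.
Hypothesis S_one : forall phi psi, cip phi psi = 1 -> ip (S phi) (S psi) = 1.

Lemma S_scaleR_add a phi psi : S ((a%:C)%C *: phi + psi) = a *: S phi + S psi.
Proof. by have := S_linear phi psi a 1; rewrite !scale1r. Qed.

Lemma S_add phi psi : S (phi + psi) = S phi + S psi.
Proof. by have := S_scaleR_add 1 phi psi; rewrite !scale1r. Qed.

Lemma S0 : S 0 = 0.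
Proof. by apply/(addrI (S 0)); rewrite -S_add !addr0. Qed.

Lemma S_scaleR a phi : S ((a%:C)%C *: phi) = a *: S phi.
Proof. by rewrite -[_ *: phi]addr0 S_scaleR_add S0 addr0. Qed.

Lemma S_delta_unit (j : 'I_d) (u : R[i]) :
  conjc u * u = 1 -> ip (S (u *: delta_mx j 0)) (S (u *: delta_mx j 0)) = 1.
Proof. by move=> uu1; apply: S_one; rewrite cip_scale_delta uu1 eqxx mulr1. Qed.

Lemma S_delta_re_im_orth (j : 'I_d) :
  ip (S (delta_mx j 0)) (S ('i%C *: delta_mx j 0)) = 0.
Proof.
set x := S (delta_mx j 0); set y := S ('i%C *: delta_mx j 0).
have xx1 : ip x x = 1 by rewrite /x -[delta_mx _ _]scale1r S_delta_unit ?conjc1 ?mulr1.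
have yy1 : ip y y = 1 by apply: S_delta_unit; apply/eqP; simpc.
have : cip ((1 + 'i%C) *: delta_mx j 0)
           (((2^-1 : R)%:C%C * (1 + 'i%C)) *: delta_mx j 0) = 1.
  rewrite cip_scale_delta eqxx mulr1; apply/eqP; simpc.
  by rewrite eq_complex /= eqxx andbT -[2^-1]mul1r -splitr.
move=> /S_one; rewrite -scalerA S_scaleR scalerDl scale1r S_add.
rewrite (ipZr ipC ipL) (ipDl ipL) !(ipDr ipC ipL) -/x -/y xx1 yy1 [ip y x]ipC.
by lra.
Qed.

Definition Smx (A : 'M[R]_(d, 2)) : H := S (cplx_of_mx A).

Lemma Smx_linear a A B : Smx (a *: A + B) = a *: Smx A + Smx B.
Proof. by rewrite /Smx cplx_of_mx_linear S_scaleR_add. Qed.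

Lemma Smx0 : Smx 0 = 0.
Proof.
rewrite /Smx (_ : cplx_of_mx 0 = 0) ?S0 //.
by apply/matrixP => j k; rewrite !mxE.
Qed.

Lemma Smx_scale a A : Smx (a *: A) = a *: Smx A.
Proof. by rewrite -[a *: A]addr0 Smx_linear Smx0 addr0. Qed.

Lemma Smx_sum (I : Type) (r : seq I) (P : pred I) (F : I -> 'M[R]_(d, 2)) :
  Smx (\sum_(i <- r | P i) F i) = \sum_(i <- r | P i) Smx (F i).
Proof.
apply: (big_morph Smx) => [A B|]; last exact: Smx0.
by have := Smx_linear 1 A B; rewrite !scale1r.
Qed.

Lemma Smx_expand A :
  Smx A = \sum_(j < d) \sum_(k < 2) A j k *: Smx (delta_mx j k).
Proof.
rewrite {1}(matrix_sum_delta A) Smx_sum; apply: eq_bigr => j _.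
by rewrite Smx_sum; apply: eq_bigr => k _; rewrite Smx_scale.
Qed.

Lemma Smx_delta_orthonormal (j j' : 'I_d) (k k' : 'I_2) :
  ip (Smx (delta_mx j k)) (Smx (delta_mx j' k')) = ((j == j') && (k == k'))%:R.
Proof.
rewrite /Smx !cplx_of_mx_delta; have [<-|jj'] /= := eqVneq j j'; last first.
  by apply: S_orth; rewrite cip_scale_delta (negbTE jj') mulr0.
have [<-|] := eqVneq k k'; first exact/S_delta_unit/flag_unit_norm.
rewrite /flag_unit; case: k k' => [[|[|]]] // ? [[|[|]]] //= ? _.
  by rewrite scale1r S_delta_re_im_orth.
by rewrite ipC scale1r S_delta_re_im_orth.
Qed.

Lemma ip_Smx_delta A (j : 'I_d) (k : 'I_2) :
  ip (Smx A) (Smx (delta_mx j k)) = A j k.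
Proof.
have ip_scale_delta l m : ip (Smx (delta_mx j k)) (A l m *: Smx (delta_mx l m))
    = A l m * ((j == l) && (k == m))%:R.
  by rewrite (ipZr ipC ipL) Smx_delta_orthonormal.
rewrite ipC [Smx A]Smx_expand (ip_sumr ipC ipL) (bigD1 j) //=.
rewrite [X in _ + X]big1 => [|l ljF].
  rewrite addr0 (ip_sumr ipC ipL) (bigD1 k) //= [X in _ + X]big1 => [|m mkF].
    by rewrite addr0 ip_scale_delta !eqxx mulr1.
  by rewrite ip_scale_delta eqxx eq_sym (negbTE mkF) mulr0.
rewrite (ip_sumr ipC ipL) big1 // => m _.
by rewrite ip_scale_delta eq_sym (negbTE ljF) mulr0.
Qed.

Lemma Smx_isometry A B : ip (Smx A) (Smx B) = tens_ip A B.
Proof.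
rewrite [Smx B]Smx_expand (ip_sumr ipC ipL); apply: eq_bigr => j _.
rewrite (ip_sumr ipC ipL); apply: eq_bigr => k _.
by rewrite (ipZr ipC ipL) ip_Smx_delta mulrC.
Qed.

Lemma Smx_injective : injective Smx.
Proof.
move=> A B eqAB.
have : Smx (- 1 *: B + A) = 0 by rewrite Smx_linear eqAB scaleN1r addNr.
move=> /(congr1 (fun h => ip h h)); rewrite Smx_isometry (ip0l ipL).
by move=> /tens_ip_eq0/eqP; rewrite scaleN1r addrC subr_eq0 => /eqP.
Qed.

Lemma S_sum_delta (c : 'I_d -> R[i]) :
  S (\sum_(j < d) c j *: delta_mx j 0) =
  \sum_(j < d) (complex.Re (c j) *: Smx (delta_mx j 0)
                + complex.Im (c j) *: Smx (delta_mx j 1)).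
Proof.
apply: (big_ind2 (fun u v => S u = v)) => [|u v u' v' <- <-|j _].
- exact: S0.
- exact: S_add.
rewrite /Smx !cplx_of_mx_delta /flag_unit /= scale1r {1}[c j]complexE.
by rewrite scalerDl mulrC -scalerA S_add !S_scaleR.
Qed.

End RealLinearEncoding.

Theorem proposition1 (R : realType) (d : nat) (H : lmodType R)
    (ip : H -> H -> R) (S : 'cV[R[i]]_d -> H) (g : 'M[R]_2 -> H -> H) :
  (0 < d)%N ->
  is_real_hilbert ip ->
  (forall (phi psi : 'cV[R[i]]_d) (a b : R),
      S ((a%:C)%C *: phi + (b%:C)%C *: psi) = a *: S phi + b *: S psi) ->
  is_SO2_rep ip g ->
  (forall (psi : 'cV[R[i]]_d) (alpha : R),
      S (eiang alpha *: psi) = g (rotation2 alpha) (S psi)) ->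
  (forall phi psi : 'cV[R[i]]_d, cip phi psi = 0 -> ip (S phi) (S psi) = 0) ->
  (forall phi psi : 'cV[R[i]]_d, cip phi psi = 1 -> ip (S phi) (S psi) = 1) ->
  (forall h : H, exists psi : 'cV[R[i]]_d, S psi = h) ->
  exists U : 'M[R]_(d, 2) -> H,
    [/\ (forall (a : R) (A B : 'M[R]_(d, 2)), U (a *: A + B) = a *: U A + U B),
        bijective U,
        (forall A B : 'M[R]_(d, 2), ip (U A) (U B) = tens_ip A B) &
        exists (e : 'I_d -> 'cV[R[i]]_d) (et : 'I_d -> 'cV[R]_d),
          [/\ cONB e, rONB et &
              forall c : 'I_d -> R[i],
                S (\sum_(j < d) c j *: e j) =
                \sum_(j < d) ((complex.Re (c j) : R) *: U (tensor (et j) (@ketF R 0))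
                              + (complex.Im (c j) : R) *: U (tensor (et j) (@ketF R 1)))]].
Proof.
move=> _ [ipC ipL _ _ _] S_linear _ _ S_orth S_one S_surj.
exists (Smx S); split.
- exact: Smx_linear.
- apply: inj_surj_bij; first exact: Smx_injective.
  by move=> h; have [psi <-] := S_surj h; exists (mx_of_cplx psi); rewrite /Smx mx_of_cplxK.
- exact: Smx_isometry.
exists (fun j => delta_mx j 0), (fun j => delta_mx j 0).
split; [exact: cONB_delta | exact: rONB_delta |] => c.
by rewrite S_sum_delta //; apply: eq_bigr => j _; rewrite !tensor_delta.
Qed.
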